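(* Let $1<\gamma<2$ and let $A,N,\omega,V$ be real functions of $x$ on an interval, with $A>0$, $N\ge0$, $\omega>0$, $|V|<1$, solving the system $$\frac{A'}{A}=1-A+\frac{2\omega(1+(\gamma-1)V^2)}{1-V^2},\qquad \frac{N'}{N}=-2+A-(2-\gamma)\omega,\qquad \frac{A'}{A}=-\frac{2\gamma NV\omega}{1-V^2},$$ $$(1+NV)\frac{\omega'}{\omega}+\frac{\gamma(N+V)V'}{1-V^2}=\frac{3(2-\gamma)}{2}NV-\frac{2+\gamma}{2}ANV+(2-\gamma)NV\omega,$$ $$(\gamma-1)(N+V)\frac{\omega'}{\omega}+\frac{\gamma(1+NV)V'}{1-V^2}=(2-\gamma)(\gamma-1)N\omega+\frac{7\gamma-6}{2}N+\frac{2-3\gamma}{2}AN,$$ where $'=d/dx$. Then $A$ is monotonically non-decreasing on every subinterval on which $A<1$.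
   Context: This is the system of ordinary differential equations for continuously self-similar spherically symmetric solutions of Einstein's equations with a perfect fluid of equation of state $p=(\gamma-1)\rho$, in the self-similar variable $x=\ln(-r/t)$, where $A=a^2$ (metric function), $N=\alpha/(ae^x)$ (rescaled lapse), $\omega=4\pi r^2a^2\rho$ (rescaled density), and $V$ is the fluid 3-velocity. *)

From Stdlib Require Import Reals.
From Coquelicot Require Import Coquelicot.
Open Scope R_scope.

Definition in_open_interval (a b : Rbar) (x : R) : Prop :=
  Rbar_lt a x /\ Rbar_lt x b.

(* Only the first field equation is needed: it reads A'/A = (1 - A) + 2 w (1 + (gamma - 1) V^2) / (1 - V^2),
   and for w > 0, gamma > 1, |V| < 1 the last term is nonnegative, so A' > 0 wherever 0 < A < 1.
   The mean value theorem then gives monotonicity. *)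
From Stdlib Require Import Reals Lra Psatz.
From Coquelicot Require Import Coquelicot.
Open Scope R_scope.

Lemma in_open_interval_between (a b : Rbar) (c d z : R) :
  in_open_interval a b c -> in_open_interval a b d -> c <= z <= d ->
  in_open_interval a b z.
Proof.
  intros [Hac Hcb] [Had Hdb] Hz; split.
  - destruct a; simpl in *; auto; lra.
  - destruct b; simpl in *; auto; lra.
Qed.

Lemma nondecreasing_of_Derive_ge0 (f : R -> R) (x y : R) :
  x <= y ->
  (forall z, x <= z <= y -> ex_derive f z) ->
  (forall z, x <= z <= y -> 0 <= Derive f z) ->
  f x <= f y.
Proof.
  intros Hxy Hdf Hpos.
  assert (Hrange : forall z, Rmin x y <= z <= Rmax x y -> x <= z <= y).
  { intros z; rewrite Rmin_left, Rmax_right by lra; auto. }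
  destruct (MVT_gen f x y (Derive f)) as [z [Hz Hmvt]].
  - intros z Hz; apply Derive_correct, Hdf, Hrange; lra.
  - intros z Hz; apply derivable_continuous_pt, ex_derive_Reals_0, Hdf, Hrange, Hz.
  - apply Hrange in Hz; pose proof (Hpos z Hz); nra.
Qed.

Lemma fluid_source_ge0 (gamma w v : R) :
  1 < gamma -> 0 < w -> Rabs v < 1 ->
  0 <= 2 * w * (1 + (gamma - 1) * v ^ 2) / (1 - v ^ 2).
Proof.
  intros Hg Hw Hv.
  assert (Hv2 : v ^ 2 < 1) by (apply Rabs_def2 in Hv; nra).
  assert (Hnum : 0 <= 2 * w * (1 + (gamma - 1) * v ^ 2)).
  { assert (0 <= (gamma - 1) * v ^ 2) by (apply Rmult_le_pos; nra). nra. }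
  unfold Rdiv; apply Rmult_le_pos; [exact Hnum|].
  apply Rlt_le, Rinv_0_lt_compat; lra.
Qed.

Lemma Derive_ge0_of_log_derivative (f : R -> R) (z q : R) :
  0 < f z -> f z < 1 -> 0 <= q ->
  Derive f z / f z = 1 - f z + q ->
  0 <= Derive f z.
Proof.
  intros Hf0 Hf1 Hq Hlog.
  replace (Derive f z) with (f z * (Derive f z / f z)) by (field; lra).
  apply Rmult_le_pos; lra.
Qed.

Theorem lemma5 (gamma : R) (a b : Rbar) (A N w V : R -> R) :
  1 < gamma < 2 ->
  Rbar_lt a b ->
  (forall x, in_open_interval a b x ->
     ex_derive A x /\ ex_derive N x /\ ex_derive w x /\ ex_derive V x) ->
  (forall x, in_open_interval a b x ->
     0 < A x /\ 0 <= N x /\ 0 < w x /\ Rabs (V x) < 1) ->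
  (forall x, in_open_interval a b x ->
     Derive A x / A x
       = 1 - A x + 2 * w x * (1 + (gamma - 1) * V x ^ 2) / (1 - V x ^ 2)) ->
  (forall x, in_open_interval a b x ->
     Derive N x = N x * (-2 + A x - (2 - gamma) * w x)) ->
  (forall x, in_open_interval a b x ->
     Derive A x / A x = - (2 * gamma * N x * V x * w x) / (1 - V x ^ 2)) ->
  (forall x, in_open_interval a b x ->
     (1 + N x * V x) * (Derive w x / w x)
       + gamma * (N x + V x) * Derive V x / (1 - V x ^ 2)
     = 3 * (2 - gamma) / 2 * N x * V x - (2 + gamma) / 2 * A x * N x * V x
       + (2 - gamma) * N x * V x * w x) ->
  (forall x, in_open_interval a b x ->
     (gamma - 1) * (N x + V x) * (Derive w x / w x)
       + gamma * (1 + N x * V x) * Derive V x / (1 - V x ^ 2)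
     = (2 - gamma) * (gamma - 1) * N x * w x + (7 * gamma - 6) / 2 * N x
       + (2 - 3 * gamma) / 2 * A x * N x) ->
  forall c d : R,
    in_open_interval a b c -> in_open_interval a b d ->
    (forall x, c <= x <= d -> A x < 1) ->
    forall x y, c <= x -> x <= y -> y <= d -> A x <= A y.
Proof.
  intros Hgamma _ Hder Hbounds HA _ _ _ _ c d Hc Hd HA1 x y Hcx Hxy Hyd.
  assert (Hin : forall z, x <= z <= y -> in_open_interval a b z).
  { intros z Hz; apply (in_open_interval_between a b c d z Hc Hd); lra. }
  apply nondecreasing_of_Derive_ge0; [exact Hxy | |].
  - intros z Hz; apply (Hder z (Hin z Hz)).
  - intros z Hz.
    destruct (Hbounds z (Hin z Hz)) as [HA0 [_ [Hw HV]]].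
    apply (Derive_ge0_of_log_derivative A z
             (2 * w z * (1 + (gamma - 1) * V z ^ 2) / (1 - V z ^ 2))).
    + exact HA0.
    + apply HA1; lra.
    + apply fluid_source_ge0; [lra | exact Hw | exact HV].
    + apply HA, Hin, Hz.
Qed.
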